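(* Assume (A1)–(A5). Then for all $(t,x,y)\in(0,+\infty)\times\mathbb{R}^2$, $\underline{u}(t,x+y)-\underline{u}(t,x)\le|y|$.
   Context: Let $R,p,G:\mathbb{R}\to\mathbb{R}$; for each integer $K\ge1$ let $\delta_K>0$ with $\delta_K\to0$ and $h_K:=\delta_K\log K\to0$. (A1) $R,p$ Lipschitz with $\underline{R}\le R\le\overline{R}$, $0<\underline{p}\le p\le\overline{p}$. (A2) $G$ positive continuous, $\int G=1$, $G(x)=f(x)e^{-|x|}$ with $0<\min f\le f\le\sup f<\infty$. (A3) $u^{K,0}(i\delta_K)\le-A|i\delta_K|+B_1$ for all $i,K$, constants $A,B_1>0$. (A4) There is $L\in(0,1)$ with $|u^{K,0}((i+1)\delta_K)-u^{K,0}(i\delta_K)|\le L\delta_K$. (A5) The linear interpolation of $u^{K,0}$ converges locally uniformly to a continuous $u^0$. Let $u^K$ solve $\frac{d}{dt}u^{K}_i=R(i\delta_K)+\sum_{l}p((l+i)\delta_K)h_KG(lh_K)e^{\log K(u^{K}_{l+i}-u^{K}_i)}$, $u^K_i(0)=u^{K,0}(i\delta_K)$, and $\widetilde u^K(t,x)=u^K_i(t)(1-\frac{x}{\delta_K}+i)+u^K_{i+1}(t)(\frac{x}{\delta_K}-i)$ for $x\in[i\delta_K,(i+1)\delta_K)$. Define $\underline{u}(t,x)=\liminf_{K\to\infty,(s,y)\to(t,x)}\widetilde u^K(s,y)$. *)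

From Stdlib Require Import Reals ZArith.
From Coquelicot Require Import Coquelicot.
Open Scope R_scope.

Definition is_zsum (f : Z -> R) (s : R) : Prop :=
  exists a b : R,
    is_series (fun n : nat => f (Z.of_nat n)) a /\
    is_series (fun n : nat => f (- (Z.of_nat n + 1))%Z) b /\
    s = a + b.

(* Linear interpolation on the grid delta*Z of the lattice values v :
   for x in [i delta, (i+1) delta), i = floor(x/delta). *)
Definition lin_interp (v : Z -> R) (delta x : R) : R :=
  let i := Int_part (x / delta) in
  v i * (1 - x / delta + IZR i) + v (i + 1)%Z * (x / delta - IZR i).

Definition hK (delta : nat -> R) (K : nat) : R := delta K * ln (INR K).

Definition ode_term (Rf p G : R -> R) (delta : nat -> R) (K : nat)
  (w : Z -> R) (i l : Z) : R :=
  p (IZR (l + i) * delta K) * hK delta K * G (IZR l * hK delta K)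
    * exp (ln (INR K) * (w (l + i)%Z - w i)).

(* underline u(t,x) = liminf_{K -> oo, (s,y) -> (t,x)} tilde u^K(s,y)
   = sup_{eps>0, N} inf { tilde u^K(s,y) : K >= max(N,1), |s-t|<eps, |y-x|<eps } *)
Definition lower_relaxed (u : nat -> Z -> R -> R) (delta : nat -> R)
  (t x : R) : Rbar :=
  Rbar_lub (fun w => exists eps : R, exists N : nat, 0 < eps /\
    w = Rbar_glb (fun z => exists (K : nat) (s y : R),
          (1 <= K)%nat /\ (N <= K)%nat /\ Rabs (s - t) < eps /\
          Rabs (y - x) < eps /\
          z = Finite (lin_interp (fun i => u K i s) (delta K) y))).

From Stdlib Require Import Reals ZArith Lra Lia Classical.
From Coquelicot Require Import Coquelicot.
Open Scope R_scope.

(* Write [y' = (i + 1 - lam) delta_K], so that the interpolant at [(s, y')] is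
   [g(s) = lam u_i(s) + (1 - lam) u_(i+1)(s)].  Minimising [g(σ) - ln (σ - s + T)]
   over [(s - T, s]] produces a time [s0] with [g(s0) <= g(s) - ln (T / (s0 - s + T))]
   at which [g' <= 1 / (s0 - s + T)]; as [R] is bounded below, this bounds the two
   jump sums of the equation by [D ~ 1 / (s0 - s + T)].  By (A2) and the convexity of
   [exp], the [lam]-weighted jump term of index [l] is at least
   [plo flo h_K exp (log K (lam (u_(l+i) - u_i) + (1 - lam) (u_(l+i+1) - u_(i+1)) - |l delta_K|))],
   and among the [~ eps / delta_K] indices with [l delta_K] within [eps] of [y] one
   of these terms is at most [D delta_K / eps].  Taking logarithms, the interpolant at
   [(s0, y' + l delta_K)] exceeds [g(s)] by at most [|y| + eps + O(1 / log K)]: the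
   gain [ln (T / (s0 - s + T))] absorbs the blow-up of [ln D].  Letting [K -> oo] and
   [eps -> 0] in the relaxed lower limit gives the claim. *)

Lemma sum_n_m_gt_const (a : nat -> R) (c : R) (m n : nat) :
  (forall k, (m <= k <= m + n)%nat -> c < a k) ->
  INR (S n) * c < sum_n_m a m (m + n).
Proof.
  induction n as [|n IH]; intros Ha.
  - rewrite Nat.add_0_r, sum_n_n. specialize (Ha m ltac:(lia)). simpl. lra.
  - rewrite Nat.add_succ_r, sum_n_Sm, S_INR by lia. change (@plus R_AbelianMonoid) with Rplus.
    assert (Hsum := IH (fun k Hk => Ha k ltac:(lia))).
    assert (Hlast := Ha (S (m + n)) ltac:(lia)).
    lra.
Qed.

Lemma sum_n_m_le_series (a : nat -> R) (l : R) (m n : nat) :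
  (forall k, 0 <= a k) -> is_series a l -> sum_n_m a m n <= l.
Proof.
  intros Ha Hl.
  assert (Hpartial : forall N, sum_n a N <= l).
  { apply (is_lim_seq_incr_compare (sum_n a) l Hl).
    intro N. rewrite sum_Sn. change (@plus R_AbelianMonoid) with Rplus.
    specialize (Ha (S N)). lra. }
  assert (Hnonneg : forall p q, 0 <= sum_n_m a p q).
  { intros p q. rewrite <- (Rmult_0_r (INR (S q - p))), <- sum_n_m_const.
    apply sum_n_m_le. exact Ha. }
  destruct (le_lt_dec m n) as [Hmn|Hnm].
  - destruct m as [|m]; [exact (Hpartial n)|].
    eapply Rle_trans; [|exact (Hpartial n)].
    unfold sum_n. rewrite (sum_n_m_Chasles a 0 m n) by lia.
    change (@plus R_AbelianMonoid) with Rplus. specialize (Hnonneg 0%nat m). lra.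
  - rewrite sum_n_m_zero by exact Hnm. change (@zero R_AbelianMonoid) with 0.
    exact (Rle_trans _ _ _ (Hnonneg 0%nat 0%nat) (Hpartial 0%nat)).
Qed.

Lemma series_pigeonhole (a : nat -> R) (l : R) (m n : nat) :
  (forall k, 0 <= a k) -> is_series a l ->
  exists k, (m <= k <= m + n)%nat /\ a k <= l / INR (S n).
Proof.
  intros Ha Hl. apply NNPP. intro Hnone.
  assert (Hbig := sum_n_m_gt_const a (l / INR (S n)) m n).
  assert (Hpos : 0 < INR (S n)) by apply lt_0_INR, Nat.lt_0_succ.
  assert (HSl : INR (S n) * (l / INR (S n)) < sum_n_m a m (m + n)).
  { apply Hbig. intros k Hk. apply Rnot_le_lt. intro Hak. apply Hnone. now exists k. }
  replace (INR (S n) * (l / INR (S n))) with l in HSl by (field; lra).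
  assert (Hle := sum_n_m_le_series a l m (m + n) Ha Hl). lra.
Qed.

Definition zhalf (neg : bool) (j : nat) : Z :=
  if neg then (- (Z.of_nat j + 1))%Z else Z.of_nat j.

Lemma is_series_ge0 (a : nat -> R) (l : R) :
  (forall k, 0 <= a k) -> is_series a l -> 0 <= l.
Proof.
  intros Ha Hl. apply Rle_trans with (sum_n_m a 0 0).
  - rewrite sum_n_n. apply Ha.
  - exact (sum_n_m_le_series a l 0 0 Ha Hl).
Qed.

Lemma zsum_pigeonhole (F : Z -> R) (s : R) (neg : bool) (m n : nat) :
  (forall l, 0 <= F l) -> is_zsum F s ->
  exists k, (m <= k <= m + n)%nat /\ F (zhalf neg k) <= s / INR (S n).
Proof.
  intros HF [a [b [Ha [Hb ->]]]].
  assert (Ha0 := is_series_ge0 _ a (fun _ => HF _) Ha).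
  assert (Hb0 := is_series_ge0 _ b (fun _ => HF _) Hb).
  assert (Hside : is_series (fun j => F (zhalf neg j)) (if neg then b else a))
    by now destruct neg.
  destruct (series_pigeonhole _ _ m n (fun _ => HF _) Hside) as [k [Hk Hsmall]].
  exists k. split; [exact Hk|]. eapply Rle_trans; [exact Hsmall|].
  apply Rmult_le_compat_r; [apply Rlt_le, Rinv_0_lt_compat, lt_0_INR, Nat.lt_0_succ|].
  destruct neg; lra.
Qed.

Lemma is_series_lincomb (f g : nat -> R) (A B al be : R) :
  is_series f A -> is_series g B ->
  is_series (fun n => al * f n + be * g n) (al * A + be * B).
Proof.
  intros Hf Hg.
  exact (is_series_plus _ _ _ _ (is_series_scal al f A Hf) (is_series_scal be g B Hg)).
Qed.

Lemma is_zsum_lincomb (f g : Z -> R) (A B al be : R) :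
  is_zsum f A -> is_zsum g B ->
  is_zsum (fun l => al * f l + be * g l) (al * A + be * B).
Proof.
  intros [a1 [b1 [Ha1 [Hb1 ->]]]] [a2 [b2 [Ha2 [Hb2 ->]]]].
  exists (al * a1 + be * a2), (al * b1 + be * b2).
  split; [|split]; [apply is_series_lincomb; assumption..|ring].
Qed.

Lemma nat_floor_mul (x d : R) : 0 <= x -> 0 < d ->
  exists m : nat, INR m * d <= x < (INR m + 1) * d.
Proof.
  intros Hx Hd. destruct (nfloor_ex (x / d)) as [m Hm]; [apply Rdiv_le_0_compat; lra|].
  exists m. destruct Hm as [Hlo Hhi].
  apply (Rmult_le_compat_r d) in Hlo; [|lra]. apply (Rmult_lt_compat_r d) in Hhi; [|lra].
  replace (x / d * d) with x in Hlo, Hhi by (field; lra). lra.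
Qed.

Lemma exists_zhalf_block_near (y d e : R) (n : nat) : 0 < d -> INR (S n) * d <= e ->
  exists neg m, forall k, (m <= k <= m + n)%nat -> Rabs (IZR (zhalf neg k) * d - y) <= e.
Proof.
  intros Hd He. rewrite S_INR in He.
  assert (Hk_range : forall m k, (m <= k <= m + n)%nat ->
                     INR m <= INR k /\ INR k <= INR m + INR n).
  { intros m k Hk. rewrite <- plus_INR. split; apply le_INR; lia. }
  destruct (Rle_or_lt 0 y) as [Hy|Hy].
  - destruct (nat_floor_mul y d Hy Hd) as [m Hm].
    exists false, m. intros k Hk. destruct (Hk_range m k Hk).
    cbn [zhalf]. rewrite <- INR_IZR_INZ. apply Rabs_le. nra.
  - destruct (nat_floor_mul (- y) d ltac:(lra) Hd) as [m Hm].
    exists true, m. intros k Hk. destruct (Hk_range m k Hk).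
    cbn [zhalf]. rewrite opp_IZR, plus_IZR, <- INR_IZR_INZ. apply Rabs_le. nra.
Qed.

Lemma exp_convex (lam a b : R) : 0 <= lam <= 1 ->
  exp (lam * a + (1 - lam) * b) <= lam * exp a + (1 - lam) * exp b.
Proof.
  intros Hlam. set (c := lam * a + (1 - lam) * b).
  assert (Htangent : forall z, exp c * (1 + (z - c)) <= exp z).
  { intro z. replace (exp z) with (exp c * exp (z - c)) by (rewrite <- exp_plus; f_equal; ring).
    apply Rmult_le_compat_l; [apply Rlt_le, exp_pos | apply exp_ineq1_le]. }
  assert (Ha := Htangent a). assert (Hb := Htangent b).
  assert (Hc : lam * (exp c * (1 + (a - c))) + (1 - lam) * (exp c * (1 + (b - c))) = exp c)
    by (unfold c; ring).
  assert (lam * (exp c * (1 + (a - c))) <= lam * exp a) by (apply Rmult_le_compat_l; lra).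
  assert ((1 - lam) * (exp c * (1 + (b - c))) <= (1 - lam) * exp b)
    by (apply Rmult_le_compat_l; lra).
  lra.
Qed.

Lemma ln_inv_add_le (r T c : R) : 0 < r <= T -> 0 <= c ->
  ln (/ r + c) <= ln T - ln r + ln (/ T + c).
Proof.
  intros Hr Hc.
  assert (HT : 0 < / T) by (apply Rinv_0_lt_compat; lra).
  rewrite <- ln_div, <- ln_mult by (try apply Rdiv_lt_0_compat; lra).
  apply ln_le; [assert (0 < / r) by (apply Rinv_0_lt_compat; lra); lra|].
  replace (T / r * (/ T + c)) with (/ r + T / r * c) by (field; lra).
  assert (1 <= T / r)
    by (apply (Rmult_le_reg_r r); [lra|]; unfold Rdiv; rewrite Rmult_assoc, Rinv_l; lra).
  nra.
Qed.

Lemma log_budget_le (X lnD lnQ C1 C2 L : R) :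
  0 <= X -> 1 <= L -> lnD <= X + C1 -> C2 <= lnQ ->
  (lnD - lnQ) / L <= X + Rabs (C1 - C2) / L.
Proof.
  intros HX HL HD HQ.
  assert (HinvL : 0 < / L <= 1)
    by (split; [apply Rinv_0_lt_compat | rewrite <- Rinv_1; apply Rinv_le_contravar]; lra).
  assert (HC := RRle_abs (C1 - C2)).
  unfold Rdiv.
  apply Rle_trans with ((X + (C1 - C2)) * / L); [apply Rmult_le_compat_r; lra|].
  rewrite Rmult_plus_distr_r.
  assert (X * / L <= X) by (rewrite <- (Rmult_1_r X) at 2; apply Rmult_le_compat_l; lra).
  assert ((C1 - C2) * / L <= Rabs (C1 - C2) * / L) by (apply Rmult_le_compat_r; lra).
  lra.
Qed.

Lemma Int_part_add_IZR (r : R) (m : Z) : Int_part (r + IZR m) = (Int_part r + m)%Z.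
Proof.
  symmetry. apply Int_part_spec. rewrite plus_IZR.
  destruct (base_Int_part r). lra.
Qed.

Lemma lin_interp_shift (v : Z -> R) (d y : R) (m : Z) : d <> 0 ->
  lin_interp v d (y + IZR m * d) = lin_interp (fun j => v (m + j)%Z) d y.
Proof.
  intros Hd. unfold lin_interp.
  replace ((y + IZR m * d) / d) with (y / d + IZR m) by (field; exact Hd).
  rewrite Int_part_add_IZR, plus_IZR, (Z.add_comm _ m), Z.add_assoc. ring.
Qed.

Lemma is_derive_left_min_le0 (f : R -> R) (x l r : R) : 0 < r -> is_derive f x l ->
  (forall s, x - r < s < x -> f x <= f s) -> l <= 0.
Proof.
  intros Hr Hd Hmin. apply Rnot_lt_le. intro Hl.
  apply is_derive_Reals in Hd.
  destruct (Hd (l / 2) ltac:(lra)) as [e He].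
  set (h := - Rmin e r / 2).
  assert (Hmin_pos : 0 < Rmin e r) by (apply Rmin_pos; [apply cond_pos | lra]).
  assert (Hh_e : Rabs h < e).
  { unfold h. rewrite Rabs_left by lra.
    assert (Rmin e r <= e) by apply Rmin_l. assert (0 < e) by apply cond_pos. lra. }
  specialize (He h ltac:(unfold h; lra) Hh_e).
  assert (Hquot : (f (x + h) - f x) / h <= 0).
  { assert (Rmin e r <= r) by apply Rmin_r.
    assert (f x <= f (x + h)) by (apply Hmin; unfold h; lra).
    assert (/ h < 0) by (apply Rinv_lt_0_compat; unfold h; lra).
    unfold Rdiv. nra. }
  apply Rabs_def2 in He. lra.
Qed.

Lemma exists_penalized_left_min (g : R -> R) (a s : R) : a < s ->
  (forall σ, a <= σ <= s -> ex_derive g σ) ->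
  exists s0, a < s0 <= s /\ g s0 - ln (s0 - a) <= g s - ln (s - a) /\
             Derive g s0 <= / (s0 - a).
Proof.
  intros Has Hg.
  set (phi := fun σ => g σ - ln (σ - a)).
  assert (Dphi : forall σ, a < σ <= s -> is_derive phi σ (Derive g σ - / (σ - a))).
  { intros σ Hσ. apply (is_derive_minus g (fun σ => ln (σ - a))).
    - apply Derive_correct, Hg. lra.
    - auto_derive; [lra | field; lra]. }
  assert (Cg : forall σ, a <= σ <= s -> continuity_pt g σ)
    by (intros σ Hσ; apply continuity_pt_filterlim, (ex_derive_continuous g), Hg, Hσ).
  assert (Cphi : forall σ, a < σ <= s -> continuity_pt phi σ).
  { intros σ Hσ. apply continuity_pt_filterlim, (ex_derive_continuous phi).
    eexists. exact (Dphi σ Hσ). }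
  destruct (continuity_ab_min g a s ltac:(lra) Cg) as [mx [Hmx Hmx_in]].
  (* near [a] the penalty [- ln (σ - a)] blows up, so [phi] exceeds [phi s] there *)
  set (th := Rmin ((s - a) / 2) (exp (g mx - phi s - 1))).
  assert (Hth : 0 < th) by (apply Rmin_pos; [lra | apply exp_pos]).
  assert (Hth_s : th <= (s - a) / 2) by apply Rmin_l.
  assert (Hphi_th : phi s < phi (a + th)).
  { unfold phi at 2. replace (a + th - a) with th by ring.
    assert (ln th <= g mx - phi s - 1).
    { rewrite <- (ln_exp (g mx - phi s - 1)). apply ln_le; [exact Hth | apply Rmin_r]. }
    assert (g mx <= g (a + th)) by (apply Hmx; lra). lra. }
  destruct (continuity_ab_min phi (a + th) s ltac:(lra)) as [s0 [Hs0 Hs0_in]].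
  { intros σ Hσ. apply Cphi. lra. }
  assert (Hs0_s : phi s0 <= phi s) by (apply Hs0; lra).
  assert (Hs0_th : a + th < s0).
  { destruct (proj1 Hs0_in) as [Hlt | Heq]; [exact Hlt|]. rewrite <- Heq in Hs0_s. lra. }
  exists s0. split; [lra | split; [exact Hs0_s|]].
  assert (Hle0 := is_derive_left_min_le0 phi s0 _ (s0 - (a + th)) ltac:(lra)
                    (Dphi s0 ltac:(lra)) (fun σ Hσ => Hs0 σ ltac:(lra))).
  lra.
Qed.

Lemma Rbar_lub_is_lub (E : Rbar -> Prop) : Rbar_is_lub E (Rbar_lub E).
Proof. exact (proj2_sig (Rbar_ex_lub E)). Qed.

Lemma Rbar_glb_is_glb (E : Rbar -> Prop) : Rbar_is_glb E (Rbar_glb E).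
Proof. exact (proj2_sig (Rbar_ex_glb E)). Qed.

Lemma Rbar_glb_le_plus (E F : Rbar -> Prop) (c : R) :
  (forall z, F z -> is_finite z) ->
  (forall r, F (Finite r) -> exists r', E (Finite r') /\ r' <= r + c) ->
  Rbar_le (Rbar_glb E) (Rbar_plus (Rbar_glb F) (Finite c)).
Proof.
  intros Hfin Hshift.
  assert (Hlb : Rbar_is_lower_bound F (Rbar_plus (Rbar_glb E) (Finite (- c)))).
  { intros z Hz. rewrite <- (Hfin z Hz) in Hz |- *.
    destruct (Hshift _ Hz) as [r' [Hr' Hle]].
    assert (HE := proj1 (Rbar_glb_is_glb E) _ Hr').
    destruct (Rbar_glb E); cbn in *; lra. }
  assert (HF := Rbar_plus_le_compat _ _ (Finite c) (Finite c)
                  (proj2 (Rbar_glb_is_glb F) _ Hlb) (Rbar_le_refl _)).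
  destruct (Rbar_glb E) as [r| |]; [|exact HF|exact I].
  replace r with (r + - c + c) by ring. exact HF.
Qed.

Lemma Rbar_le_plus_eps (x y : Rbar) (c : R) :
  (forall eta, 0 < eta -> Rbar_le x (Rbar_plus y (Finite (c + eta)))) ->
  Rbar_le x (Rbar_plus y (Finite c)).
Proof.
  intros H. assert (H1 := H 1 Rlt_0_1).
  destruct x as [x| |], y as [y| |]; cbn in *; try easy.
  apply Rle_plus_epsilon. intros eta Heta. specialize (H eta Heta). cbn in H. lra.
Qed.

(* [lower_relaxed u delta t x] unfolds to an instance of [sup_inf]. *)
Definition sup_inf (B : R -> nat -> Rbar -> Prop) : Rbar :=
  Rbar_lub (fun w => exists eps N, 0 < eps /\ w = Rbar_glb (B eps N)).

Lemma sup_inf_le_plus (Bx Bxy : R -> nat -> Rbar -> Prop) (c : R) :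
  (forall e N z, Bx e N z -> is_finite z) ->
  (forall e N eta, 0 < e -> 0 < eta -> exists e2 N2, 0 < e2 /\
     forall r, Bx e2 N2 (Finite r) -> exists r', Bxy e N (Finite r') /\ r' <= r + (c + eta)) ->
  Rbar_le (sup_inf Bxy) (Rbar_plus (sup_inf Bx) (Finite c)).
Proof.
  intros Hfin Hshift. apply Rbar_lub_is_lub. intros w [e [N [He ->]]].
  apply Rbar_le_plus_eps. intros eta Heta.
  destruct (Hshift e N eta He Heta) as [e2 [N2 [He2 Hr]]].
  eapply Rbar_le_trans; [exact (Rbar_glb_le_plus _ _ _ (Hfin e2 N2) Hr)|].
  apply Rbar_plus_le_compat; [|apply Rbar_le_refl].
  apply Rbar_lub_is_lub. now exists e2, N2.
Qed.

Lemma eventually_div_ln_le (c eta : R) : 0 < eta ->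
  eventually (fun K => 1 <= ln (INR K) /\ c / ln (INR K) <= eta).
Proof.
  intros Heta. destruct (INR_unbounded (exp (Rmax 1 (c / eta)))) as [N HN].
  exists N. intros K HK. apply le_INR in HK.
  assert (Hln : Rmax 1 (c / eta) <= ln (INR K))
    by (rewrite <- (ln_exp (Rmax 1 (c / eta))); apply ln_le; [apply exp_pos | lra]).
  assert (HL1 : 1 <= ln (INR K)) by (eapply Rle_trans; [apply Rmax_l | exact Hln]).
  assert (Hc : c / eta <= ln (INR K)) by (eapply Rle_trans; [apply Rmax_r | exact Hln]).
  split; [exact HL1|].
  apply (Rmult_le_reg_r (ln (INR K))); [lra|].
  apply (Rmult_le_compat_l eta) in Hc; [|lra].
  replace (eta * (c / eta)) with c in Hc by (field; lra).
  replace (c / ln (INR K) * ln (INR K)) with c by (field; lra).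
  lra.
Qed.

Lemma eventually_lt_of_lim0 (a : nat -> R) (e : R) :
  is_lim_seq a 0 -> 0 < e -> eventually (fun n => a n < e).
Proof.
  intros Ha He. apply is_lim_seq_spec in Ha.
  destruct (Ha (mkposreal e He)) as [N HN]. exists N. intros n Hn.
  specialize (HN n Hn). cbn in HN. rewrite Rminus_0_r in HN.
  apply Rabs_def2 in HN. lra.
Qed.

Section Lattice.

Variables (Rf p G : R -> R) (delta : nat -> R) (K : nat) (Rlo plo flo : R) (v : Z -> R -> R).
Hypothesis HRlo : forall x, Rlo <= Rf x.
Hypothesis Hplo : 0 < plo.
Hypothesis Hp : forall x, plo <= p x.
Hypothesis Hflo : 0 < flo.
Hypothesis HG : forall x, flo * exp (- Rabs x) <= G x.
Hypothesis Hdelta : 0 < delta K.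
Hypothesis HlnK : 1 <= ln (INR K).
Hypothesis Hode : forall (i : Z) (σ : R), 0 < σ -> exists S : R,
  is_zsum (ode_term Rf p G delta K (fun j => v j σ) i) S /\
  is_derive (v i) σ (Rf (IZR i * delta K) + S).

Lemma hK_pos : 0 < hK delta K.
Proof. unfold hK. apply Rmult_lt_0_compat; lra. Qed.

Lemma ode_lower_const_pos : 0 < plo * flo * hK delta K.
Proof. apply Rmult_lt_0_compat; [apply Rmult_lt_0_compat|apply hK_pos]; lra. Qed.

Lemma ode_term_ge (w : Z -> R) (i l : Z) :
  plo * flo * hK delta K *
    exp (ln (INR K) * (w (l + i)%Z - w i - Rabs (IZR l * delta K)))
  <= ode_term Rf p G delta K w i l.
Proof.
  unfold ode_term. assert (Hh := hK_pos).
  set (h := hK delta K) in *. set (L := ln (INR K)) in *.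
  set (X := exp (L * (w (l + i)%Z - w i))).
  set (E := exp (- (Rabs (IZR l * delta K) * L))).
  replace (exp (L * (w (l + i)%Z - w i - Rabs (IZR l * delta K)))) with (X * E)
    by (unfold X, E; rewrite <- exp_plus; f_equal; ring).
  assert (HGl := HG (IZR l * h)).
  replace (Rabs (IZR l * h)) with (Rabs (IZR l * delta K) * L) in HGl
    by (unfold h, hK; fold L; rewrite <- Rmult_assoc, (Rabs_mult _ L), (Rabs_right L) by lra;
        reflexivity).
  fold E in HGl.
  assert (Hpl := Hp (IZR (l + i) * delta K)).
  assert (HX : 0 < X) by apply exp_pos. assert (HE : 0 < E) by apply exp_pos.
  replace (plo * flo * h * (X * E)) with (plo * (flo * E) * (h * X)) by ring.
  replace (p (IZR (l + i) * delta K) * h * G (IZR l * h) * X)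
    with (p (IZR (l + i) * delta K) * G (IZR l * h) * (h * X)) by ring.
  apply Rmult_le_compat_r; [apply Rlt_le, Rmult_lt_0_compat; lra|].
  apply Rmult_le_compat; [lra | apply Rlt_le, Rmult_lt_0_compat; lra | lra | lra].
Qed.

Lemma ode_term_nonneg (w : Z -> R) (i l : Z) : 0 <= ode_term Rf p G delta K w i l.
Proof.
  eapply Rle_trans; [|apply ode_term_ge].
  apply Rlt_le, Rmult_lt_0_compat; [exact ode_lower_const_pos | apply exp_pos].
Qed.

Lemma ode_term_convex_ge (w : Z -> R) (i l : Z) (lam : R) : 0 <= lam <= 1 ->
  plo * flo * hK delta K *
    exp (ln (INR K) * (lam * (w (l + i)%Z - w i) + (1 - lam) * (w (l + (i + 1))%Z - w (i + 1)%Z)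
                       - Rabs (IZR l * delta K)))
  <= lam * ode_term Rf p G delta K w i l + (1 - lam) * ode_term Rf p G delta K w (i + 1)%Z l.
Proof.
  intros Hlam. set (L := ln (INR K)). set (c := Rabs (IZR l * delta K)).
  set (A := w (l + i)%Z - w i). set (B := w (l + (i + 1))%Z - w (i + 1)%Z).
  assert (Hconv := exp_convex lam (L * (A - c)) (L * (B - c)) Hlam).
  replace (lam * (L * (A - c)) + (1 - lam) * (L * (B - c)))
    with (L * (lam * A + (1 - lam) * B - c)) in Hconv by ring.
  assert (HQ := ode_lower_const_pos).
  assert (Hi := ode_term_ge w i l). assert (Hi1 := ode_term_ge w (i + 1) l).
  fold L c A in Hi. fold L c B in Hi1.
  apply Rle_trans with (plo * flo * hK delta K *
    (lam * exp (L * (A - c)) + (1 - lam) * exp (L * (B - c)))).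
  - apply Rmult_le_compat_l; lra.
  - replace (plo * flo * hK delta K * (lam * exp (L * (A - c)) + (1 - lam) * exp (L * (B - c))))
      with (lam * (plo * flo * hK delta K * exp (L * (A - c)))
            + (1 - lam) * (plo * flo * hK delta K * exp (L * (B - c)))) by ring.
    apply Rplus_le_compat; apply Rmult_le_compat_l; lra.
Qed.

Lemma exists_small_increment (w : Z -> R) (i : Z) (lam Si Si1 D : R) (neg : bool) (m n : nat) :
  0 <= lam <= 1 -> 0 < D ->
  is_zsum (ode_term Rf p G delta K w i) Si ->
  is_zsum (ode_term Rf p G delta K w (i + 1)%Z) Si1 ->
  lam * Si + (1 - lam) * Si1 <= D ->
  exists k, (m <= k <= m + n)%nat /\
    lam * (w (zhalf neg k + i)%Z - w i)
      + (1 - lam) * (w (zhalf neg k + (i + 1))%Z - w (i + 1)%Z)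
    <= Rabs (IZR (zhalf neg k) * delta K)
       + ln (D / (INR (S n) * (plo * flo * hK delta K))) / ln (INR K).
Proof.
  intros Hlam HD HSi HSi1 HSD.
  set (F := fun l => lam * ode_term Rf p G delta K w i l
                     + (1 - lam) * ode_term Rf p G delta K w (i + 1)%Z l).
  assert (HF : forall l, 0 <= F l).
  { intro l. unfold F. assert (H0 := ode_term_nonneg w i l).
    assert (H1 := ode_term_nonneg w (i + 1) l).
    apply Rplus_le_le_0_compat; apply Rmult_le_pos; lra. }
  destruct (zsum_pigeonhole F _ neg m n HF (is_zsum_lincomb _ _ _ _ lam (1 - lam) HSi HSi1))
    as [k [Hk Hsmall]].
  exists k. split; [exact Hk|].
  set (l := zhalf neg k) in *.
  set (combo := lam * (w (l + i)%Z - w i) + (1 - lam) * (w (l + (i + 1))%Z - w (i + 1)%Z)).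
  set (L := ln (INR K)) in *. set (Q := plo * flo * hK delta K).
  assert (HQ : 0 < Q) by exact ode_lower_const_pos.
  assert (Hn : 0 < INR (S n)) by apply lt_0_INR, Nat.lt_0_succ.
  assert (Hexp : Q * exp (L * (combo - Rabs (IZR l * delta K))) <= D / INR (S n)).
  { eapply Rle_trans; [apply (ode_term_convex_ge w i l lam Hlam)|].
    eapply Rle_trans; [exact Hsmall|].
    apply Rmult_le_compat_r; [apply Rlt_le, Rinv_0_lt_compat|]; lra. }
  assert (Hln : L * (combo - Rabs (IZR l * delta K)) <= ln (D / (INR (S n) * Q))).
  { rewrite <- (ln_exp (L * (combo - Rabs (IZR l * delta K)))).
    apply ln_le; [apply exp_pos|].
    replace (D / (INR (S n) * Q)) with (D / INR (S n) / Q) by (field; lra).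
    apply (Rmult_le_reg_l Q); [exact HQ|].
    replace (Q * (D / INR (S n) / Q)) with (D / INR (S n)) by (field; lra). exact Hexp. }
  apply (Rmult_le_reg_l L); [lra|].
  replace (L * (Rabs (IZR l * delta K) + ln (D / (INR (S n) * Q)) / L))
    with (L * (Rabs (IZR l * delta K)) + ln (D / (INR (S n) * Q))) by (field; lra).
  lra.
Qed.

Lemma ln_block_weight_ge (eps : R) (n : nat) :
  0 < eps -> eps < (INR (S n) + 1) * delta K -> 2 * delta K <= eps ->
  ln (plo * flo * eps / 2) <= ln (INR (S n) * (plo * flo * hK delta K)).
Proof.
  intros He Hn Hde.
  assert (Hcount : eps / 2 <= INR (S n) * delta K) by lra.
  assert (Hh : delta K <= hK delta K)
    by (unfold hK; rewrite <- (Rmult_1_r (delta K)) at 1; apply Rmult_le_compat_l; lra).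
  assert (Hpf : 0 < plo * flo) by (apply Rmult_lt_0_compat; lra).
  apply ln_le; [nra|].
  apply Rle_trans with (plo * flo * (INR (S n) * delta K)).
  - replace (plo * flo * eps / 2) with (plo * flo * (eps / 2)) by field.
    apply Rmult_le_compat_l; lra.
  - replace (INR (S n) * (plo * flo * hK delta K)) with (plo * flo * (INR (S n) * hK delta K))
      by ring.
    apply Rmult_le_compat_l; [lra|]. apply Rmult_le_compat_l; [apply pos_INR | exact Hh].
Qed.

Lemma exists_time_with_bounded_rates (i : Z) (lam a s : R) :
  0 <= lam <= 1 -> 0 < a < s ->
  exists s0 Si Si1, a < s0 <= s /\
    is_zsum (ode_term Rf p G delta K (fun j => v j s0) i) Si /\
    is_zsum (ode_term Rf p G delta K (fun j => v j s0) (i + 1)%Z) Si1 /\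
    lam * v i s0 + (1 - lam) * v (i + 1)%Z s0 - ln (s0 - a)
      <= lam * v i s + (1 - lam) * v (i + 1)%Z s - ln (s - a) /\
    lam * Si + (1 - lam) * Si1 <= / (s0 - a) + Rabs Rlo.
Proof.
  intros Hlam Has.
  set (g := fun σ => lam * v i σ + (1 - lam) * v (i + 1)%Z σ).
  assert (Dg : forall σ, 0 < σ -> exists Si Si1,
    is_zsum (ode_term Rf p G delta K (fun j => v j σ) i) Si /\
    is_zsum (ode_term Rf p G delta K (fun j => v j σ) (i + 1)%Z) Si1 /\
    is_derive g σ (lam * (Rf (IZR i * delta K) + Si)
                   + (1 - lam) * (Rf (IZR (i + 1) * delta K) + Si1))).
  { intros σ Hσ.
    destruct (Hode i σ Hσ) as [Si [HSi Hdi]].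
    destruct (Hode (i + 1)%Z σ Hσ) as [Si1 [HSi1 Hdi1]].
    exists Si, Si1. split; [exact HSi | split; [exact HSi1|]].
    apply (is_derive_plus (fun σ => lam * v i σ) (fun σ => (1 - lam) * v (i + 1)%Z σ));
      apply is_derive_scal; assumption. }
  destruct (exists_penalized_left_min g a s ltac:(lra)) as [s0 [Hs0 [Hval Hder]]].
  { intros σ Hσ. destruct (Dg σ ltac:(lra)) as [Si [Si1 [_ [_ Hd]]]]. eexists. exact Hd. }
  destruct (Dg s0 ltac:(lra)) as [Si [Si1 [HSi [HSi1 Hd]]]].
  rewrite (is_derive_unique _ _ _ Hd) in Hder.
  exists s0, Si, Si1. do 3 (split; [assumption|]). split; [exact Hval|].
  assert (HRi := HRlo (IZR i * delta K)). assert (HRi1 := HRlo (IZR (i + 1) * delta K)).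
  assert (Rlo <= lam * Rf (IZR i * delta K) + (1 - lam) * Rf (IZR (i + 1) * delta K)) by nra.
  assert (- Rlo <= Rabs Rlo) by (rewrite <- Rabs_Ropp; apply RRle_abs).
  lra.
Qed.

Definition shift_error (T eps : R) : R :=
  Rabs (ln (/ T + Rabs Rlo) - ln (plo * flo * eps / 2)).

Lemma exists_shifted_point_below (s T y' y eps : R) :
  0 < T < s -> 0 < eps -> 2 * delta K <= eps ->
  exists s1 m, s - T < s1 <= s /\ Rabs (IZR m * delta K - y) <= eps /\
    lin_interp (fun j => v j s1) (delta K) (y' + IZR m * delta K)
    <= lin_interp (fun j => v j s) (delta K) y' + Rabs y + eps
       + shift_error T eps / ln (INR K).
Proof.
  intros HT He Hde.
  set (i := Int_part (y' / delta K)). set (lam := 1 - y' / delta K + IZR i).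
  assert (Hlam : 0 <= lam <= 1) by (destruct (base_Int_part (y' / delta K)); unfold lam, i; lra).
  assert (Hcell : forall w, lin_interp w (delta K) y' = lam * w i + (1 - lam) * w (i + 1)%Z)
    by (intro w; unfold lin_interp, lam, i; ring).
  destruct (exists_time_with_bounded_rates i lam (s - T) s Hlam ltac:(lra))
    as [s0 [Si [Si1 [Hs0 [HSi [HSi1 [Hval Hrates]]]]]]].
  replace (s - (s - T)) with T in Hval by ring.
  set (D := / (s0 - (s - T)) + Rabs Rlo) in Hrates.
  assert (HlnD := ln_inv_add_le (s0 - (s - T)) T (Rabs Rlo) ltac:(lra) (Rabs_pos _)).
  fold D in HlnD.
  assert (HD : 0 < D)
    by (assert (0 < / (s0 - (s - T))) by (apply Rinv_0_lt_compat; lra);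
        assert (0 <= Rabs Rlo) by apply Rabs_pos; unfold D; lra).
  destruct (nat_floor_mul eps (delta K) ltac:(lra) Hdelta) as [[|n] Hn];
    [simpl in Hn; lra|].
  destruct (exists_zhalf_block_near y (delta K) eps n Hdelta ltac:(lra)) as [neg [m0 Hnear]].
  destruct (exists_small_increment
              (fun j => v j s0) i lam Si Si1 D neg m0 n Hlam HD HSi HSi1 Hrates)
    as [k [Hk Hinc]].
  set (m := zhalf neg k) in *.
  exists s0, m. split; [lra|]. split; [exact (Hnear k Hk)|].
  rewrite lin_interp_shift by lra. rewrite !Hcell.
  assert (Hm := Rabs_triang_inv (IZR m * delta K) y).
  assert (Hmy := Hnear k Hk). fold m in Hmy.
  assert (HlnQ := ln_block_weight_ge eps n He (proj2 Hn) Hde).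
  set (Q := INR (S n) * (plo * flo * hK delta K)) in Hinc, HlnQ.
  assert (HQ : 0 < Q)
    by (apply Rmult_lt_0_compat; [apply lt_0_INR; lia | exact ode_lower_const_pos]).
  rewrite ln_div in Hinc by lra.
  (* the gain [ln T - ln (s0 - (s - T))] of [Hval] pays for the blow-up of [ln D] *)
  assert (HX : 0 <= ln T - ln (s0 - (s - T)))
    by (assert (ln (s0 - (s - T)) <= ln T) by (apply ln_le; lra); lra).
  assert (Hbudget := log_budget_le _ _ _ _ _ _ HX HlnK HlnD HlnQ).
  unfold shift_error. lra.
Qed.

End Lattice.

Section Relaxation.

Variables (Rf p G : R -> R) (delta : nat -> R) (u : nat -> Z -> R -> R) (Rlo plo flo : R).
Hypothesis HRlo : forall x, Rlo <= Rf x.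
Hypothesis Hplo : 0 < plo.
Hypothesis Hp : forall x, plo <= p x.
Hypothesis Hflo : 0 < flo.
Hypothesis HG : forall x, flo * exp (- Rabs x) <= G x.
Hypothesis Hdelta_pos : forall K : nat, (1 <= K)%nat -> 0 < delta K.
Hypothesis Hdelta_lim : is_lim_seq delta 0.
Hypothesis Hode : forall (K : nat) (i : Z) (t : R), (1 <= K)%nat -> 0 < t ->
  exists S : R,
    is_zsum (ode_term Rf p G delta K (fun j => u K j t) i) S /\
    is_derive (u K i) t (Rf (IZR i * delta K) + S).

Lemma lower_relaxed_shift_le (t x y : R) : 0 < t ->
  Rbar_le (lower_relaxed u delta t (x + y))
          (Rbar_plus (lower_relaxed u delta t x) (Finite (Rabs y))).
Proof.
  intros Ht. apply sup_inf_le_plus.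
  { intros e N z (K & s & y0 & _ & _ & _ & _ & ->). reflexivity. }
  intros e N eta He Heta.
  set (eps := Rmin (e / 4) (eta / 2)).
  assert (Heps : 0 < eps) by (apply Rmin_pos; lra).
  assert (Heps_e : eps <= e / 4) by apply Rmin_l.
  assert (Heps_eta : eps <= eta / 2) by apply Rmin_r.
  set (T := Rmin e t / 4).
  assert (HT : 0 < T) by (unfold T; assert (0 < Rmin e t) by (apply Rmin_pos; lra); lra).
  assert (HT_e : T <= e / 4) by (unfold T; assert (Rmin e t <= e) by apply Rmin_l; lra).
  assert (HT_t : T <= t / 4) by (unfold T; assert (Rmin e t <= t) by apply Rmin_r; lra).
  set (Err := shift_error Rlo plo flo T eps).
  assert (HNK : eventually (fun K => (Nat.max N 1 <= K)%nat)) by now exists (Nat.max N 1).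
  destruct (filter_and (F := eventually) _ _
              (filter_and (F := eventually) _ _
                 (eventually_lt_of_lim0 _ (eps / 2) Hdelta_lim ltac:(lra))
                 (eventually_div_ln_le Err (eta / 2) ltac:(lra))) HNK)
    as [N2 HN2].
  exists T, N2. split; [exact HT|].
  intros r (K & s & y0 & _ & HK & Hs & Hy0 & Hr). injection Hr as ->.
  destruct (HN2 K HK) as [[Hd [HlnK Hsmall]] HKN].
  assert (HK1 : (1 <= K)%nat) by lia.
  apply Rabs_def2 in Hs. apply Rabs_def2 in Hy0.
  destruct (exists_shifted_point_below Rf p G delta K Rlo plo flo (u K) HRlo Hplo Hp Hflo HG
              (Hdelta_pos K HK1) HlnK (fun i σ => Hode K i σ HK1) s T y0 y eps
              ltac:(lra) Heps ltac:(lra))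
    as (s1 & m & Hs1 & Hm & Hval).
  exists (lin_interp (fun i => u K i s1) (delta K) (y0 + IZR m * delta K)). split.
  - exists K, s1, (y0 + IZR m * delta K).
    apply Rabs_le_between in Hm.
    repeat split; [exact HK1 | lia | apply Rabs_def1; lra | apply Rabs_def1; lra].
  - fold Err in Hval. lra.
Qed.

End Relaxation.

Theorem lemma5p2
  (Rf p G : R -> R) (delta : nat -> R)
  (u0 : nat -> Z -> R)            (* u0 K i = u^{K,0}(i delta_K) *)
  (uinit : R -> R)                (* the limit u^0 of (A5) *)
  (u : nat -> Z -> R -> R)        (* u K i t = u^K_i(t) *)
  (* parameters *)
  (Hdelta_pos : forall K : nat, (1 <= K)%nat -> 0 < delta K)
  (Hdelta_lim : is_lim_seq delta 0)
  (Hh_lim : is_lim_seq (hK delta) 0)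
  (* (A1) *)
  (HA1 : (exists LR : R, forall x y, Rabs (Rf x - Rf y) <= LR * Rabs (x - y)) /\
         (exists Lp : R, forall x y, Rabs (p x - p y) <= Lp * Rabs (x - y)) /\
         (exists Rlo Rhi : R, forall x, Rlo <= Rf x <= Rhi) /\
         (exists plo phi : R, 0 < plo /\ forall x, plo <= p x <= phi))
  (* (A2) *)
  (HA2 : (forall x, 0 < G x) /\ (forall x, continuous G x) /\
         is_RInt_gen G (Rbar_locally m_infty) (Rbar_locally p_infty) 1 /\
         (exists f : R -> R, (forall x, G x = f x * exp (- Rabs x)) /\
            exists flo fhi : R, 0 < flo /\ forall x, flo <= f x <= fhi))
  (* (A3) *)
  (HA3 : exists A B1 : R, 0 < A /\ 0 < B1 /\
         forall (K : nat) (i : Z), (1 <= K)%nat ->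
           u0 K i <= - A * Rabs (IZR i * delta K) + B1)
  (* (A4) *)
  (HA4 : exists L : R, 0 < L < 1 /\
         forall (K : nat) (i : Z), (1 <= K)%nat ->
           Rabs (u0 K (i + 1)%Z - u0 K i) <= L * delta K)
  (* (A5) *)
  (HA5 : (forall x, continuous uinit x) /\
         forall a b eps : R, 0 < eps -> exists N : nat, forall K : nat,
           (1 <= K)%nat -> (N <= K)%nat -> forall x, a <= x <= b ->
             Rabs (lin_interp (u0 K) (delta K) x - uinit x) < eps)
  (* u^K solves the lattice ODE system with initial datum u^{K,0} *)
  (Hinit : forall (K : nat) (i : Z), (1 <= K)%nat -> u K i 0 = u0 K i)
  (Hcont0 : forall (K : nat) (i : Z), (1 <= K)%nat ->
     filterlim (u K i) (at_right 0) (locally (u0 K i)))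
  (Hode : forall (K : nat) (i : Z) (t : R), (1 <= K)%nat -> 0 < t ->
     exists S : R,
       is_zsum (fun l => ode_term Rf p G delta K (fun j => u K j t) i l) S /\
       is_derive (u K i) t (Rf (IZR i * delta K) + S)) :
  forall t x y : R, 0 < t ->
    Rbar_le (lower_relaxed u delta t (x + y))
            (Rbar_plus (lower_relaxed u delta t x) (Finite (Rabs y))).
Proof.
  intros t x y Ht.
  destruct HA1 as (_ & _ & (Rlo & Rhi & HR) & (plo & phi & Hplo & Hp)).
  destruct HA2 as (_ & _ & _ & f & Hfeq & flo & fhi & Hflo & Hf).
  apply (lower_relaxed_shift_le Rf p G delta u Rlo plo flo); try assumption.
  - intro z. apply HR.
  - intro z. apply Hp.
  - intro z. rewrite Hfeq. apply Rmult_le_compat_r; [apply Rlt_le, exp_pos | apply Hf].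
Qed.
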